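(* Let $Q$ be a quiver with no oriented cycles, $\theta\in\mathbb{Z}^{Q_0}$, and let $\alpha_1\ne\alpha_2\in Q_1$ be arrows with $\alpha_1^-=\alpha_2^-$ and $\alpha_1^+=\alpha_2^+$. Let $Q'$ be obtained from $Q$ by collapsing $\alpha_1,\alpha_2$ to a single arrow $\alpha$, and let $\varphi:F\to\mathcal{A}(Q,\theta)$, $\varphi':F'\to\mathcal{A}(Q',\theta)$, $\pi:F\to F'$ and $\psi_s$ be as in the context. Let $\{u_\lambda-v_\lambda\mid\lambda\in\Lambda\}$ be a set of binomials generating the ideal $\ker(\varphi')$. Then $\ker(\varphi)$ is generated by $\mathcal{G}_1\cup\mathcal{G}_2$, where $\mathcal{G}_1=\{\psi_s(u_\lambda)-\psi_s(v_\lambda)\mid\lambda\in\Lambda,\ s\in S(Q,\theta),\ x^{\pi(s)}=\varphi'(u_\lambda)\}$ and $\mathcal{G}_2=\{t_mt_n-t_{m+\varepsilon_2-\varepsilon_1}t_{n+\varepsilon_1-\varepsilon_2}\mid m,n\in\nabla(Q,\theta)\cap\mathbb{Z}^{Q_1},\ m(\alpha_1)>0,\ n(\alpha_2)>0\}$, with $\varepsilon_i\in\mathbb{Z}^{Q_1}$ the characteristic function of $\alpha_i$.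
   Context: For a quiver $Q$ (vertices $Q_0$, arrows $Q_1$, $a$ from $a^-$ to $a^+$) and $\theta\in\mathbb{Z}^{Q_0}$, $\nabla(Q,\theta)=\{x\in\mathbb{R}_{\ge0}^{Q_1}\mid\forall v:\ \theta(v)=\sum_{a^+=v}x(a)-\sum_{a^-=v}x(a)\}$; $S(Q,\theta)=\coprod_{k\ge0}\nabla(Q,k\theta)\cap\mathbb{Z}^{Q_1}$ is a monoid. $x^m=\prod_ax(a)^{m(a)}$ in $\mathbb{C}[x(a)\mid a\in Q_1]$, $\mathcal{A}(Q,\theta)$ is the subalgebra generated by $x^m$, $m\in\nabla(Q,\theta)\cap\mathbb{Z}^{Q_1}$ (it has basis $x^s$, $s\in S(Q,\theta)$), $F=\mathbb{C}[t_m\mid m\in\nabla(Q,\theta)\cap\mathbb{Z}^{Q_1}]$ and $\varphi(t_m)=x^m$; similarly $F'$, $\varphi'$, $\mathcal{A}(Q',\theta)$ for $Q'$ (note $Q'_0=Q_0$). Define $\pi:\mathbb{Z}^{Q_1}\to\mathbb{Z}^{Q'_1}$ by $\pi(m)(\alpha)=m(\alpha_1)+m(\alpha_2)$ and $\pi(m)(\beta)=m(\beta)$ for $\beta\in Q_1\setminus\{\alpha_1,\alpha_2\}=Q'_1\setminus\{\alpha\}$; it maps $S(Q,\theta)$ onto $S(Q',\theta)$, and $\pi:F\to F'$ denotes the algebra map $t_m\mapsto t_{\pi(m)}$. For each monomial $u\in F'$ and each $s\in S(Q,\theta)$ with $x^{\pi(s)}=\varphi'(u)$, a monomial $\psi_s(u)\in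 F$ is fixed such that $\pi(\psi_s(u))=u$ and $\varphi(\psi_s(u))=x^s$ (such a monomial always exists). *)

From HB Require Import structures.
From mathcomp Require Import all_boot all_order all_algebra.
From mathcomp Require Import reals.
From mathcomp.real_closed Require Import complex.
From mathcomp Require Import mpoly.

Set Implicit Arguments.
Unset Strict Implicit.
Unset Printing Implicit Defensive.

Import Order.TTheory GRing.Theory Num.Theory.
Local Open Scope ring_scope.

Section Quiver.
Variables (V A : finType) (src tgt : A -> V).
(* src a = a^-, tgt a = a^+ *)

Definition acyclic : Prop :=
  forall (a : A) (p : seq A),
    path (fun x y => tgt x == src y) a p -> tgt (last a p) != src a.

Definition in_nabla (theta : V -> int) (m : {ffun A -> nat}) : Prop :=
  forall v : V, theta v = \sum_(a | tgt a == v) (m a)%:Z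
                          - \sum_(a | src a == v) (m a)%:Z.

(* S(Q, theta) = coprod_k nabla(Q, k theta) cap Z^{Q_1} (as a set of lattice points) *)
Definition in_S (theta : V -> int) (s : {ffun A -> nat}) : Prop :=
  exists k : nat, in_nabla (fun v => k%:Z * theta v) s.

(* e : 'I_n -> Z^{Q_1} is a bijection onto nabla(Q,theta) cap Z^{Q_1};
   it indexes the variables t_m (m = e i) of F = K[t_{e i} | i < n]. *)
Definition enumerates (theta : V -> int) (n : nat) (e : 'I_n -> {ffun A -> nat}) : Prop :=
  injective e /\ (forall m, in_nabla theta m <-> exists i, e i = m).

Variable K : nzRingType.

Definition xmon (m : {ffun A -> nat}) : {mpoly K[#|A|]} :=
  \prod_(a : A) 'X_(enum_rank a) ^+ (m a).

End Quiver.

Definition phi (A : finType) (K : comNzRingType) (n : nat) (e : 'I_n -> {ffun A -> nat})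
  (p : {mpoly K[n]}) : {mpoly K[#|A|]} :=
  p \mPo [tuple xmon K (e i) | i < n].

Definition in_ideal (R : comNzRingType) (G : R -> Prop) (p : R) : Prop :=
  exists (k : nat) (c g : 'I_k -> R),
    (forall j, G (g j)) /\ p = \sum_(j < k) c j * g j.

Definition generates_kernel (R S : comNzRingType) (G : R -> Prop) (f : R -> S) : Prop :=
  forall p, f p = 0 <-> in_ideal G p.

Definition is_monomial (K : comNzRingType) (n : nat) (p : {mpoly K[n]}) : Prop :=
  exists mm : 'X_{1..n}, p = 'X_[mm].

(* Q'_1 = Q_1 \ {alpha_2}, where the arrow alpha_1 (as element of Q'_1) plays the
   role of the collapsed arrow alpha; src/tgt are inherited. *)
Definition arrQ' (A : finType) (a2 : A) : finType := {a : A | a != a2}.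

Definition piv (A : finType) (a1 a2 : A) (m : {ffun A -> nat}) : {ffun arrQ' a2 -> nat} :=
  [ffun b : arrQ' a2 => if val b == a1 then m a1 + m a2 else m (val b)].

(* m + eps_b - eps_c (used when m(c) > 0 and b != c) *)
Definition shift (A : finType) (m : {ffun A -> nat}) (b c : A) : {ffun A -> nat} :=
  [ffun a => m a + (a == b) - (a == c)]%N.

(* pi : F -> F', t_{e i} |-> t_{e' (pv i)} where e' (pv i) = pi (e i) *)
Definition piF (K : comNzRingType) (n n' : nat) (pv : 'I_n -> 'I_n') (p : {mpoly K[n]})
  : {mpoly K[n']} :=
  p \mPo [tuple 'X_(pv i) | i < n].

Arguments xmon {A} K m.
Arguments phi {A} K {n} e p.
Arguments piF {K n n'} pv p.

(* Both kinds of generators lie in ker phi, and ker phi is spanned by the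
   binomials t^m - t^m' with phi(t^m) = phi(t^m'), so it suffices to connect any
   two such monomials modulo the ideal (G_1 u G_2).  Inside a fibre of
   pi (monomials with the same image under pi and the same weight) the G_2
   binomials, which move one unit of flow from alpha_1 to alpha_2 in one variable
   and back in another, connect everything, by induction on the degree.  Between
   fibres, t^{pi m} - t^{pi m'} lies in ker phi' = (u_l - v_l), hence pi m and
   pi m' are joined by a chain of moves u_l -> v_l; each move lifts to F through
   psi_s and one generator of G_1. *)

From HB Require Import structures.
From mathcomp Require Import all_boot all_order all_algebra.
From mathcomp Require Import reals boolp.
From mathcomp.real_closed Require Import complex.
From mathcomp Require Import mpoly zify.

Set Implicit Arguments.
Unset Strict Implicit.
Unset Printing Implicit Defensive.

Import Order.TTheory GRing.Theory Num.Theory.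
Local Open Scope ring_scope.

Section InIdeal.
Variables (R : comNzRingType) (G : R -> Prop).

Lemma in_ideal0 : in_ideal G 0.
Proof. by exists 0%N, (fun _ => 0), (fun _ => 0); split => [[]|]; rewrite ?big_ord0. Qed.

Lemma in_ideal_gen g : G g -> in_ideal G g.
Proof.
by move=> hg; exists 1%N, (fun _ => 1), (fun _ => g); split; rewrite // big_ord1 mul1r.
Qed.

Lemma in_idealD p q : in_ideal G p -> in_ideal G q -> in_ideal G (p + q).
Proof.
move=> [k1 [c1 [g1 [h1 ->]]]] [k2 [c2 [g2 [h2 ->]]]].
exists (k1 + k2)%N, (fun j => match split j with inl a => c1 a | inr b => c2 b end),
  (fun j => match split j with inl a => g1 a | inr b => g2 b end); split.
  by move=> j; case: (split j).
rewrite big_split_ord; congr (_ + _); apply: eq_bigr => i _.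
  by have := unsplitK (inl _ i) => /= ->.
by have := unsplitK (inr _ i) => /= ->.
Qed.

Lemma in_idealMl q p : in_ideal G p -> in_ideal G (q * p).
Proof.
move=> [k [c [g [h ->]]]]; exists k, (fun j => q * c j), g; split => //.
by rewrite mulr_sumr; apply: eq_bigr => j _; rewrite mulrA.
Qed.

Lemma in_idealN p : in_ideal G p -> in_ideal G (- p).
Proof. by move=> h; rewrite -mulN1r; apply: in_idealMl. Qed.

Lemma in_ideal_sum (I : Type) (r : seq I) (P : pred I) (F : I -> R) :
  (forall i, P i -> in_ideal G (F i)) -> in_ideal G (\sum_(i <- r | P i) F i).
Proof.
move=> h; elim: r => [|x r IH]; first by rewrite big_nil; apply: in_ideal0.
by rewrite big_cons; case: ifP => // Px; apply: in_idealD => //; apply: h.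
Qed.

End InIdeal.

Section Multinomials.
Variable k : nat.
Implicit Types (m : 'X_{1..k}).

Lemma mpolyX_inj (K : nzRingType) m m' : 'X_[m] = 'X_[m'] :> {mpoly K[k]} -> m = m'.
Proof.
move=> h; have := congr1 (mcoeff m) h; rewrite !mcoeffX eqxx.
by case: eqP => // _ /eqP; rewrite oner_eq0.
Qed.

Lemma mdeg_gt0P m : (0 < mdeg m)%N -> exists i, (0 < m i)%N.
Proof.
case: (pickP (fun i => (0 < m i)%N)) => [i hi _|h]; first by exists i.
by rewrite mdegE big1 // => i _; move: (h i); lia.
Qed.

Lemma mnm_subU_addU m i : (0 < m i)%N -> (m - U_(i) + U_(i))%MM = m.
Proof. by move=> h; rewrite submK // lep1mP; lia. Qed.

Lemma mdeg_subU m i : (0 < m i)%N -> mdeg (m - U_(i))%MM = (mdeg m).-1.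
Proof. by move=> /mnm_subU_addU {2}<-; rewrite mdegD mdeg1 addn1. Qed.

Lemma mnm_subUU_addUU m i j : (0 < m i)%N -> (0 < (m - U_(i))%MM j)%N ->
  (m - U_(i) - U_(j) + (U_(j) + U_(i)))%MM = m.
Proof. by move=> hi hj; rewrite addmA !mnm_subU_addU. Qed.

End Multinomials.

Section MonomialWeight.
Variables (K : comNzRingType) (A : finType) (k : nat) (e0 : 'I_k -> {ffun A -> nat}).
Implicit Types (m : 'X_{1..k}).

Definition mnm_weight m : {ffun A -> nat} := [ffun a => \sum_(i < k) m i * e0 i a]%N.

Lemma mnm_weightD m m' a : mnm_weight (m + m')%MM a = (mnm_weight m a + mnm_weight m' a)%N.
Proof. by rewrite !ffunE -big_split; apply: eq_bigr => i _; rewrite mnmDE mulnDl. Qed.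

Lemma mnm_weight0 a : mnm_weight 0%MM a = 0%N.
Proof. by rewrite ffunE big1 // => i _; rewrite mnm0E. Qed.

Lemma mnm_weightU i a : mnm_weight U_(i)%MM a = e0 i a.
Proof.
rewrite ffunE (bigD1 i) //= mnm1E eqxx mul1n big1 ?addn0 // => j /negbTE hj.
by rewrite mnm1E eq_sym hj.
Qed.

Lemma mnm_weightB m m' a : (m' <= m)%MM ->
  mnm_weight (m - m')%MM a = (mnm_weight m a - mnm_weight m' a)%N.
Proof. by move=> h; have := mnm_weightD (m - m')%MM m' a; rewrite submK // => ->; lia. Qed.

Lemma mnm_weight_ge m i a : (0 < m i)%N -> (e0 i a <= mnm_weight m a)%N.
Proof.
move=> h; rewrite ffunE (bigD1 i) //=; apply: leq_trans (leq_addr _ _).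
by rewrite leq_pmull.
Qed.

Lemma mnm_weight_gt0P m a : (0 < mnm_weight m a)%N -> exists i, (0 < m i)%N /\ (0 < e0 i a)%N.
Proof.
case: (pickP (fun i => (0 < m i)%N && (0 < e0 i a)%N)) => [i /andP[h1 h2] _|h].
  by exists i.
rewrite ffunE big1 // => i _; move: (h i); case: (m i) => [|q] //=.
by case: (e0 i a) => //=; rewrite muln0.
Qed.

Definition ffun_mnm (m : {ffun A -> nat}) : 'X_{1..#|A|} :=
  [multinom m (enum_val j) | j < #|A|].

Lemma ffun_mnm_inj : injective ffun_mnm.
Proof.
move=> m m' /mnmP h; apply/ffunP => a.
by have := h (enum_rank a); rewrite !mnmE enum_rankK.
Qed.

Lemma xmonE (m : {ffun A -> nat}) : xmon K m = 'X_[ffun_mnm m].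
Proof.
rewrite /xmon (eq_bigr (fun a => 'X_[U_(enum_rank a)] ^+ m a)) // mprodXnE.
congr 'X_[_]; apply/mnmP => j; rewrite mnm_sumE mnmE.
rewrite (bigD1 (enum_val j)) //= mulmnE mnm1E enum_valK eqxx mul1n big1 ?addn0 //.
move=> a ha; rewrite mulmnE mnm1E.
by case: eqP => // hj; rewrite -hj enum_rankK eqxx in ha.
Qed.

Lemma xmon_inj : injective (xmon K : {ffun A -> nat} -> _).
Proof. by move=> m m'; rewrite !xmonE => /mpolyX_inj /ffun_mnm_inj. Qed.

Lemma xmonD (m m' : {ffun A -> nat}) :
  xmon K m * xmon K m' = xmon K [ffun a => m a + m' a]%N.
Proof.
rewrite !xmonE -mpolyXD; congr 'X_[_]; apply/mnmP => j.
by rewrite mnmDE !mnmE ffunE.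
Qed.

Lemma phi_mpolyX m : phi K e0 'X_[m] = xmon K (mnm_weight m).
Proof.
rewrite /phi comp_mpolyX (eq_bigr (fun i => 'X_[ffun_mnm (e0 i)] ^+ m i)); last first.
  by move=> i _; rewrite tnth_mktuple xmonE.
rewrite mprodXnE xmonE; congr 'X_[_]; apply/mnmP => j.
by rewrite mnm_sumE mnmE ffunE; apply: eq_bigr => i _; rewrite mulmnE mnmE mulnC.
Qed.

Lemma phiB p q : phi K e0 (p - q) = phi K e0 p - phi K e0 q.
Proof. exact: rmorphB. Qed.

Lemma phiM p q : phi K e0 (p * q) = phi K e0 p * phi K e0 q.
Proof. exact: rmorphM. Qed.

Lemma phiZ c p : phi K e0 (c *: p) = c *: phi K e0 p.
Proof. exact: comp_mpolyZ. Qed.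

Lemma phi_sum (I : Type) (r : seq I) (P : pred I) (F : I -> {mpoly K[k]}) :
  phi K e0 (\sum_(i <- r | P i) F i) = \sum_(i <- r | P i) phi K e0 (F i).
Proof. exact: rmorph_sum. Qed.

End MonomialWeight.

Section MonomialPush.
Variables (k k' : nat) (pv : 'I_k -> 'I_k').
Implicit Types (m : 'X_{1..k}).

Definition mpush m : 'X_{1..k'} := [multinom (\sum_(i < k | pv i == j) m i)%N | j < k'].

Lemma mpushD m m' : mpush (m + m')%MM = (mpush m + mpush m')%MM.
Proof.
by apply/mnmP => j; rewrite mnmDE !mnmE -big_split; apply: eq_bigr => i _; rewrite mnmDE.
Qed.

Lemma mpush0 : mpush 0%MM = 0%MM.
Proof. by apply/mnmP => j; rewrite mnmE mnm0E big1 // => i _; rewrite mnm0E. Qed.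

Lemma mpushU i : mpush U_(i)%MM = U_(pv i)%MM.
Proof.
apply/mnmP => j; rewrite mnmE mnm1E; case: (eqVneq (pv i) j) => [<-|hj].
  by rewrite (bigD1 i) //= mnm1E eqxx big1 // => l /andP[_ /negbTE]; rewrite mnm1E eq_sym => ->.
by rewrite big1 // => l /eqP hl; rewrite mnm1E; case: eqP => // el; rewrite el hl eqxx in hj.
Qed.

Lemma mdeg_mpush m : mdeg (mpush m) = mdeg m.
Proof.
rewrite !mdegE; under eq_bigr do rewrite mnmE.
by rewrite [RHS](partition_big pv xpredT).
Qed.

Lemma mpush_gt0P m j : (0 < mpush m j)%N -> exists i, (0 < m i)%N /\ pv i = j.
Proof.
case: (pickP (fun i => (pv i == j) && (0 < m i)%N)) => [i /andP[/eqP hj hi] _|h].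
  by exists i.
by rewrite mnmE big1 // => i hi; move: (h i); rewrite hi /=; lia.
Qed.

Lemma mpush_splitP m (M1 M2 : 'X_{1..k'}) : mpush m = (M1 + M2)%MM ->
  exists m1 m2, [/\ m = (m1 + m2)%MM, mpush m1 = M1 & mpush m2 = M2].
Proof.
have [d hd] : exists d, mdeg M1 = d by eexists.
elim: d M1 hd m => [|d IH] M1 hd m h.
  move/eqP: hd; rewrite mdeg_eq0 => /eqP hM1; subst M1.
  by exists 0%MM, m; rewrite add0m mpush0; move: h; rewrite add0m.
have [j hj] : exists j, (0 < M1 j)%N by apply: mdeg_gt0P; rewrite hd.
have [i [hi hpi]] : exists i, (0 < m i)%N /\ pv i = j.
  by apply: mpush_gt0P; rewrite h mnmDE; lia.
have h' : mpush (m - U_(i))%MM = (M1 - U_(j) + M2)%MM.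
  apply: (@addIm _ U_(j)%MM); rewrite -{1}hpi -mpushU -mpushD mnm_subU_addU // h.
  by rewrite -addmA [(M2 + _)%MM]addmC addmA mnm_subU_addU.
have [m1 [m2 [e1 e2 e3]]] := IH _ (etrans (mdeg_subU hj) (congr1 predn hd)) _ h'.
exists (m1 + U_(i))%MM, m2; split => //.
  by rewrite -(mnm_subU_addU hi) e1 -addmA [(m2 + _)%MM]addmC addmA.
by rewrite mpushD e2 mpushU hpi mnm_subU_addU.
Qed.

Lemma piF_mpolyX (K : comNzRingType) m : piF (K:=K) pv 'X_[m] = 'X_[mpush m].
Proof.
rewrite /piF comp_mpolyX (eq_bigr (fun i => 'X_[U_(pv i)] ^+ m i)); last first.
  by move=> i _; rewrite tnth_mktuple.
rewrite mprodXnE; congr 'X_[_]; apply/mnmP => j.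
rewrite mnm_sumE mnmE [RHS]big_mkcond /=; apply: eq_bigr => i _.
by rewrite mulmnE mnm1E; case: eqP => _; rewrite ?mul1n ?mul0n.
Qed.

End MonomialPush.

Section BinomialIdeal.
Variables (K : comNzRingType) (k : nat) (Lambda : Type) (u v : Lambda -> {mpoly K[k]}).
Hypotheses (hu : forall l, is_monomial (u l)) (hv : forall l, is_monomial (v l)).
Variable E : 'X_{1..k} -> 'X_{1..k} -> Prop.
Hypotheses (E_refl : forall m, E m m) (E_sym : forall m m', E m m' -> E m' m)
  (E_trans : forall m m' m'', E m m' -> E m' m'' -> E m m'').
Hypothesis E_move : forall l w U W, u l = 'X_[U] -> v l = 'X_[W] -> E (w + U)%MM (w + W)%MM.
Implicit Types (m : 'X_{1..k}) (f g : {mpoly K[k]}).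

Definition class_coeff m0 f : K := \sum_(m <- msupp f | `[< E m m0 >]) f@_m.

Lemma class_coeff_seq m0 f (s : seq 'X_{1..k}) : uniq s -> {subset msupp f <= s} ->
  class_coeff m0 f = \sum_(m <- s | `[< E m m0 >]) f@_m.
Proof.
move=> us hsub; rewrite [RHS](bigID (mem (msupp f))) /=.
rewrite [X in _ = _ + X]big1 ?addr0; last by move=> m /andP[_ hm]; apply/eqP; rewrite mcoeff_eq0.
rewrite /class_coeff -[RHS]big_filter -[LHS]big_filter; apply: perm_big; apply: uniq_perm.
- exact/filter_uniq/msupp_uniq.
- exact: filter_uniq.
move=> m; rewrite !mem_filter -andbA; case: (boolP (m \in msupp f)) => hm /=.
  by rewrite (hsub m hm).
by rewrite !andbF.
Qed.

Lemma class_coeffD m0 f g : class_coeff m0 (f + g) = class_coeff m0 f + class_coeff m0 g.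
Proof.
pose s := undup (msupp f ++ msupp g); have us : uniq s by apply: undup_uniq.
rewrite (@class_coeff_seq m0 (f + g) s us); last by move=> x /msuppD_le; rewrite mem_undup.
rewrite (@class_coeff_seq m0 f s us); last by move=> x hx; rewrite mem_undup mem_cat hx.
rewrite (@class_coeff_seq m0 g s us); last by move=> x hx; rewrite mem_undup mem_cat hx orbT.
by rewrite -big_split; apply: eq_bigr => m _; rewrite mcoeffD.
Qed.

Lemma class_coeffZ m0 c f : class_coeff m0 (c *: f) = c * class_coeff m0 f.
Proof.
rewrite (@class_coeff_seq m0 (c *: f) _ (msupp_uniq f)); last exact: msuppZ_le.
by rewrite mulr_sumr; apply: eq_bigr => m _; rewrite mcoeffZ.
Qed.

Lemma class_coeffB m0 f g : class_coeff m0 (f - g) = class_coeff m0 f - class_coeff m0 g.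
Proof. by rewrite class_coeffD -scaleN1r class_coeffZ mulN1r. Qed.

Lemma class_coeff_sum m0 (I : Type) (r : seq I) (F : I -> {mpoly K[k]}) :
  class_coeff m0 (\sum_(i <- r) F i) = \sum_(i <- r) class_coeff m0 (F i).
Proof.
elim: r => [|x r IH]; first by rewrite !big_nil /class_coeff msupp0 big_nil.
by rewrite !big_cons class_coeffD IH.
Qed.

Lemma class_coeffX m0 m : class_coeff m0 'X_[m] = (`[< E m m0 >])%:R.
Proof. by rewrite /class_coeff msuppX big_mkcond big_seq1 mcoeffX eqxx; case: ifP. Qed.

Lemma class_coeff_mulX m0 c U : class_coeff m0 (c * 'X_[U]) =
  \sum_(w <- msupp c) c@_w * (`[< E (w + U)%MM m0 >])%:R.
Proof.
rewrite {1}(mpolyE c) mulr_suml class_coeff_sum; apply: eq_bigr => w _.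
by rewrite -scalerAl -mpolyXD class_coeffZ class_coeffX.
Qed.

(* [class_coeff m0] is a linear form that kills every multiple of a generator
   [u l - v l], since a move never leaves an [E]-class. *)
Lemma binomial_ideal_connected m m0 :
  in_ideal (fun p => exists l, p = u l - v l) ('X_[m] - 'X_[m0]) -> E m m0.
Proof.
move=> [n [c [g [hg hsum]]]].
have hmove j : class_coeff m0 (c j * g j) = 0.
  have [l ->] := hg j; have [U hU] := hu l; have [W hW] := hv l.
  rewrite hU hW mulrBr class_coeffB !class_coeff_mulX; apply/eqP; rewrite subr_eq0; apply/eqP.
  apply: eq_bigr => w _; congr (_ * (nat_of_bool _)%:R); apply: asbool_equiv_eq.
  have hUW := @E_move l w U W hU hW.
  by split=> h; [apply: E_trans (E_sym hUW) h | apply: E_trans hUW h].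
have : class_coeff m0 ('X_[m] - 'X_[m0]) = 0 by rewrite hsum class_coeff_sum big1.
rewrite class_coeffB !class_coeffX (asboolT (E_refl m0)).
by case: asboolP => // _; rewrite sub0r => /eqP; rewrite oppr_eq0 oner_eq0.
Qed.

End BinomialIdeal.

Section MonomialKernel.
Variables (K : comNzRingType) (A : finType) (k : nat) (e0 : 'I_k -> {ffun A -> nat}).
Implicit Types (m : 'X_{1..k}) (p : {mpoly K[k]}).

Lemma mcoeff_phi p m0 : (phi K e0 p)@_(ffun_mnm (mnm_weight e0 m0)) =
  \sum_(m <- msupp p | mnm_weight e0 m == mnm_weight e0 m0) p@_m.
Proof.
rewrite {1}(mpolyE p) phi_sum raddf_sum [RHS]big_mkcond /=; apply: eq_bigr => m _.
rewrite phiZ phi_mpolyX mcoeffZ xmonE mcoeffX (inj_eq (@ffun_mnm_inj _)).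
by case: (mnm_weight e0 m == mnm_weight e0 m0); rewrite ?mulr1 ?mulr0.
Qed.

Lemma big_seq_delta (T : eqType) (r : seq T) (P : pred T) (F : T -> K) x : uniq r ->
  \sum_(y <- r | P y) F y * (y == x)%:R = if (x \in r) && P x then F x else 0.
Proof.
elim: r => [|y r IH] /=; first by rewrite big_nil.
move/andP=> [hy hr]; rewrite big_cons IH // in_cons.
case: (eqVneq y x) => [<-|hyx] /=.
  by rewrite (negbTE hy) /=; case: (P y); rewrite ?mulr1 ?addr0.
by case: (P y); rewrite ?mulr0 ?add0r.
Qed.

Lemma mcoeff_sub_fibre (P : pred 'X_{1..k}) m0 p :
  \sum_(m <- msupp p | P m) p@_m = 0 -> forall m,
  (p - \sum_(m' <- msupp p | P m') p@_m' *: ('X_[m'] - 'X_[m0]))@_m =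
  if P m then 0 else p@_m.
Proof.
move=> hsum0 m; rewrite mcoeffB raddf_sum /=.
under eq_bigr do rewrite mcoeffZ mcoeffB !mcoeffX mulrBr.
rewrite sumrB -mulr_suml hsum0 mul0r subr0 big_seq_delta ?msupp_uniq //.
case: (boolP (m \in msupp p)) => hm /=; case: (P m); rewrite ?subrr ?subr0 //.
by apply/eqP; rewrite mcoeff_eq0.
Qed.

Lemma kernel_phi_in_ideal (G : {mpoly K[k]} -> Prop) :
  (forall m m', mnm_weight e0 m = mnm_weight e0 m' -> in_ideal G ('X_[m] - 'X_[m'])) ->
  forall p, phi K e0 p = 0 -> in_ideal G p.
Proof.
move=> hfibre p; have [N hN] : exists N, (size (msupp p) <= N)%N by eexists.
elim: N p hN => [|N IH] p hN hp.
  by move: hN; rewrite leqn0 size_eq0 => /eqP /msuppnil0 ->; apply: in_ideal0.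
case: (eqVneq p 0) => [->|hp0]; first exact: in_ideal0.
have [m0 hm0] : exists m0, m0 \in msupp p.
  by move: hp0; rewrite -msupp_eq0; case: (msupp p) => // m0 s _; exists m0; rewrite inE eqxx.
pose P m := mnm_weight e0 m == mnm_weight e0 m0.
have hsum0 : \sum_(m <- msupp p | P m) p@_m = 0 by rewrite -mcoeff_phi hp mcoeff0.
pose q := \sum_(m <- msupp p | P m) p@_m *: ('X_[m] - 'X_[m0]).
have hq : in_ideal G q.
  by apply: in_ideal_sum => m /eqP hm; rewrite -mul_mpolyC; apply/in_idealMl/hfibre.
have hpq : phi K e0 q = 0.
  rewrite phi_sum big1 // => m /eqP hm.
  by rewrite phiZ phiB !phi_mpolyX hm subrr scaler0.
have hsub : {subset msupp (p - q) <= rem m0 (msupp p)}.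
  move=> m; rewrite (mem_rem_uniq _ (msupp_uniq p)) inE !mcoeff_msupp mcoeff_sub_fibre //.
  by case: (eqVneq m m0) => [->|_]; rewrite /P ?eqxx //=; case: ifP; rewrite ?eqxx.
have hsz : (size (msupp (p - q)) <= N)%N.
  have := uniq_leq_size (msupp_uniq _) hsub; rewrite size_rem // => /leq_trans; apply.
  by rewrite -subn1 leq_subLR add1n.
have := IH (p - q) hsz; rewrite phiB hp hpq subrr => /(_ erefl) h.
by rewrite -(subrK q p) addrC; apply: in_idealD.
Qed.

End MonomialKernel.

Section QuiverFlows.
Variables (V A : finType) (src tgt : A -> V) (theta : V -> int).

Lemma mnm_weight_nabla k (e0 : 'I_k -> {ffun A -> nat}) (m : 'X_{1..k}) :
  (forall i, in_nabla src tgt theta (e0 i)) ->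
  in_nabla src tgt (fun v => (mdeg m)%:Z * theta v) (mnm_weight e0 m).
Proof.
move=> he0 v; rewrite mdegE -natz natr_sum big_distrl /=.
have hs (P : pred A) : \sum_(a | P a) (mnm_weight e0 m a)%:Z =
    \sum_(i < k) (m i)%:Z * \sum_(a | P a) (e0 i a)%:Z.
  under [RHS]eq_bigr do rewrite big_distrr.
  rewrite [RHS]exchange_big /=; apply: eq_bigr => a _; rewrite ffunE -natz natr_sum.
  by apply: eq_bigr => i _; rewrite natrM !natz.
by rewrite !hs -sumrB; apply: eq_bigr => i _; rewrite -mulrBr -(he0 i v) natz.
Qed.

End QuiverFlows.

Section ArrowCollapse.
Variables (V A : finType) (src tgt : A -> V) (theta : V -> int) (a1 a2 : A).
Hypotheses (hne : a1 != a2) (hsrc : src a1 = src a2) (htgt : tgt a1 = tgt a2).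
Local Notation A' := (arrQ' a2).
Local Notation piv := (piv a1 a2).
Implicit Types (m s t : {ffun A -> nat}).

Definition alpha : A' := exist _ a1 hne.

Lemma piv_alpha m : piv m alpha = (m a1 + m a2)%N.
Proof. by rewrite ffunE /= eqxx. Qed.

Lemma piv_val m (b : A') : val b != a1 -> piv m b = m (val b).
Proof. by rewrite ffunE => /negbTE ->. Qed.

Lemma sum_arrQ' (F : A -> nat) (P : pred A) :
  (\sum_(b : A' | P (val b)) F (val b) = \sum_(a | (a != a2) && P a) F a)%N.
Proof.
rewrite (reindex_omap (val : A' -> A) insub); last first.
  by move=> i /andP[iA Pi]; rewrite insubT.
by apply: eq_bigl=> -[i iA]/=; rewrite insubT ?iA /= eqxx andbT.
Qed.

Lemma sum_piv (P : pred A) m : P a1 = P a2 ->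
  (\sum_(a | P a) m a = \sum_(b : A' | P (val b)) piv m b)%N.
Proof.
move=> hP; have -> : (\sum_(b : A' | P (val b)) piv m b =
    \sum_(b : A' | P (val b)) (m (val b) + (val b == a1) * m a2))%N.
  by apply: eq_bigr => b _; rewrite ffunE; case: eqP => [->|_]; lia.
rewrite big_split /= sum_arrQ' (sum_arrQ' (fun a => (a == a1) * m a2)%N).
case hP2: (P a2).
  rewrite (bigD1 a2) //= [X in (_ = _ + X)%N](bigD1 a1) /=; last by rewrite hne hP hP2.
  rewrite eqxx [X in (_ = _ + (_ + X))%N]big1; last by move=> a /andP[_ /negbTE ->].
  by rewrite addn0 mul1n addnC; congr (_ + _)%N; apply: eq_bigl => a; rewrite andbC.
rewrite [X in (_ = _ + X)%N]big1 ?addn0; last first.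
  by move=> a /andP[_ Pa]; case: eqP Pa => [->|]; rewrite ?hP ?hP2.
by apply: eq_bigl => a; case: (eqVneq a a2) => [->|]; rewrite ?hP2.
Qed.

Lemma in_nabla_piv m : in_nabla src tgt theta m <->
  in_nabla (fun b : A' => src (val b)) (fun b : A' => tgt (val b)) theta (piv m).
Proof.
have hsum (f : A -> V) (v : V) : f a1 = f a2 ->
    \sum_(a | f a == v) (m a)%:Z = \sum_(b : A' | f (val b) == v) (piv m b)%:Z.
  move=> hf; under eq_bigr do rewrite -natz; under [RHS]eq_bigr do rewrite -natz.
  by rewrite -!natr_sum (@sum_piv (fun a => f a == v) m) ?hf.
by rewrite /in_nabla; split=> h v; rewrite h !hsum.
Qed.

Lemma piv_shift m b c : (0 < m c)%N -> (b, c) \in [:: (a1, a2); (a2, a1)] ->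
  piv (shift m b c) = piv m.
Proof.
move=> hm hbc; apply/ffunP => x; have h21 : (a2 == a1) = false by rewrite eq_sym (negbTE hne).
case: (eqVneq (val x) a1) => [hx|hx].
  rewrite (_ : x = alpha); last exact: val_inj.
  rewrite !piv_alpha !ffunE; move: hbc hm; rewrite !inE.
  by case/orP => /eqP[-> ->]; rewrite !eqxx (negbTE hne) h21; lia.
have hx2 : val x != a2 := valP x.
rewrite !piv_val // ffunE; move: hbc; rewrite !inE.
by case/orP => /eqP[-> ->]; rewrite (negbTE hx) (negbTE hx2) addn0 subn0.
Qed.

Lemma piv_inj_a1 m m' : piv m = piv m' -> m a1 = m' a1 -> m = m'.
Proof.
move=> hp h1; apply/ffunP => a.
have := congr1 (fun f : {ffun A' -> nat} => f alpha) hp; rewrite !piv_alpha => h12.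
case: (eqVneq a a1) => [->//|ha1]; case: (eqVneq a a2) => [->|ha2]; first by lia.
by have := congr1 (fun f : {ffun A' -> nat} => f (exist _ a ha2)) hp; rewrite !piv_val.
Qed.

Lemma piv_le_lift s (m' : {ffun A' -> nat}) : (forall b, m' b <= piv s b)%N ->
  exists2 t : {ffun A -> nat}, (forall a, t a <= s a)%N & piv t = m'.
Proof.
(* Put as much of the flow on [alpha] onto [a1] as [s] allows, the rest onto [a2]. *)
move=> hle; pose c := m' alpha; pose c1 := minn c (s a1).
pose t : {ffun A -> nat} := [ffun a => if a == a1 then c1 else if a == a2 then (c - c1)%N
  else if insub a is Some b then m' b else 0%N].
have hc : (c <= s a1 + s a2)%N by rewrite -piv_alpha; apply: hle.
exists t.
  move=> a; rewrite ffunE; case: (eqVneq a a1) => [->|ha1]; first by lia.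
  case: (eqVneq a a2) => [->|ha2]; first by lia.
  by rewrite insubT -(piv_val s (b := exist _ a ha2)).
apply/ffunP => -[b hb]; case: (eqVneq b a1) => [hb1|hb1].
  subst b; rewrite (_ : exist _ a1 hb = alpha); last exact: val_inj.
  by rewrite piv_alpha !ffunE eqxx eq_sym (negbTE hne) eqxx; lia.
rewrite piv_val // ffunE /= (negbTE hb1) (negbTE hb) insubT /=.
by congr (m' _); apply: val_inj.
Qed.

Lemma piv_sub s t : (forall a, t a <= s a)%N ->
  piv [ffun a => s a - t a]%N = [ffun b => piv s b - piv t b]%N.
Proof.
move=> hts; apply/ffunP => b; rewrite !ffunE; case: ifP => _; rewrite ?ffunE //.
by have := hts a1; have := hts a2; lia.
Qed.

Lemma shift_swapD m m' a : (0 < m a1)%N -> (0 < m' a2)%N ->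
  (shift m a2 a1 a + shift m' a1 a2 a = m a + m' a)%N.
Proof.
move=> h1 h2; have h21 : (a2 == a1) = false by rewrite eq_sym (negbTE hne).
rewrite !ffunE; case: (eqVneq a a1) => [->|ha1]; first by rewrite ?eqxx ?(negbTE hne); lia.
case: (eqVneq a a2) => [->|ha2]; first by rewrite ?eqxx ?h21; lia.
by rewrite !addn0 !subn0.
Qed.

End ArrowCollapse.

Section CollapseKernel.
Variables (K : comNzRingType) (V A : finType) (src tgt : A -> V) (theta : V -> int) (a1 a2 : A).
Hypotheses (hne : a1 != a2) (hsrc : src a1 = src a2) (htgt : tgt a1 = tgt a2).
Local Notation A' := (arrQ' a2).
Local Notation piv := (piv a1 a2).
Variables (n : nat) (e : 'I_n -> {ffun A -> nat}).
Hypothesis he : enumerates src tgt theta e.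
Variables (n' : nat) (e' : 'I_n' -> {ffun A' -> nat}).
Hypothesis he' : enumerates (fun b : A' => src (val b)) (fun b : A' => tgt (val b)) theta e'.
Variable pv : 'I_n -> 'I_n'.
Hypothesis hpv : forall i, e' (pv i) = piv (e i).
Local Notation wt := (mnm_weight e).
Local Notation wt' := (mnm_weight e').
Implicit Types (i j : 'I_n) (m : 'X_{1..n}) (M : 'X_{1..n'}).

Lemma e_nabla i : in_nabla src tgt theta (e i).
Proof. by apply/(proj2 he); exists i. Qed.

Lemma pv_eq_of_piv i j : piv (e i) = piv (e j) -> pv i = pv j.
Proof. by move=> h; apply: (proj1 he'); rewrite !hpv. Qed.

Lemma pv_inj_a1 i j : pv i = pv j -> e i a1 = e j a1 -> i = j.
Proof. by move=> hp h1; apply: (proj1 he); apply: (piv_inj_a1 hne _ h1); rewrite -!hpv hp. Qed.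

Lemma pv_eq_sum12 i j : pv i = pv j -> (e i a1 + e i a2 = e j a1 + e j a2)%N.
Proof. by move=> h; rewrite -!piv_alpha -!hpv h. Qed.

Lemma shift_index i b c : (0 < e i c)%N -> (b, c) \in [:: (a1, a2); (a2, a1)] ->
  exists2 j, e j = shift (e i) b c & pv j = pv i.
Proof.
move=> hc hbc; have hsh := piv_shift hne hc hbc.
have [j hj] : exists j, e j = shift (e i) b c.
  apply/(proj2 he)/(in_nabla_piv theta hne hsrc htgt); rewrite hsh.
  exact/(in_nabla_piv theta hne hsrc htgt)/e_nabla.
by exists j => //; apply: pv_eq_of_piv; rewrite hj hsh.
Qed.

Lemma piv_weight m : piv (wt m) = wt' (mpush pv m).
Proof.
apply/ffunP => b; transitivity (\sum_(i < n) m i * e' (pv i) b)%N.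
  under [RHS]eq_bigr do rewrite hpv ffunE.
  rewrite ffunE; case: ifP => _; rewrite !ffunE // -big_split.
  by apply: eq_bigr => i _; rewrite mulnDr.
rewrite [LHS](partition_big pv xpredT) //= ffunE; apply: eq_bigr => j _.
by rewrite mnmE big_distrl; apply: eq_bigr => i /eqP <-.
Qed.

Lemma mpush_lift M s : piv s = wt' M -> exists2 m, mpush pv m = M & wt m = s.
Proof.
have [d hd] : exists d, mdeg M = d by eexists.
elim: d M s hd => [|d IH] M s hd hs.
  move/eqP: hd; rewrite mdeg_eq0 => /eqP hM; subst M.
  exists 0%MM; first exact: mpush0.
  apply: (piv_inj_a1 hne); first by rewrite piv_weight mpush0 hs.
  have := congr1 (fun f : {ffun A' -> nat} => f (alpha hne)) hs.
  by rewrite piv_alpha !mnm_weight0; lia.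
have [j hj] : exists j : 'I_n', (0 < M j)%N by apply: mdeg_gt0P; rewrite hd.
have [t hts hpt] : exists2 t : {ffun A -> nat}, (forall a, t a <= s a)%N & piv t = e' j.
  by apply: (piv_le_lift hne) => b; rewrite hs; apply: mnm_weight_ge.
have [i hi] : exists i, e i = t.
  apply/(proj2 he)/(in_nabla_piv theta hne hsrc htgt); rewrite hpt.
  by apply/(proj2 he'); exists j.
have hpi : pv i = j by apply: (proj1 he'); rewrite hpv hi.
have hd' : mdeg (M - U_(j))%MM = d by rewrite mdeg_subU // hd.
have hs' : piv [ffun a => s a - t a]%N = wt' (M - U_(j))%MM.
  apply/ffunP => b; rewrite piv_sub // ffunE mnm_weightB ?lep1mP -?lt0n //.
  by rewrite hs hpt mnm_weightU.
have [m0 hm0 hw0] := IH _ _ hd' hs'.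
exists (m0 + U_(i))%MM; first by rewrite mpushD hm0 mpushU hpi mnm_subU_addU.
by apply/ffunP => a; rewrite mnm_weightD mnm_weightU hi hw0 ffunE; have := hts a; lia.
Qed.

Variables (Lambda : Type) (u v : Lambda -> {mpoly K[n']}).
Hypotheses (hu : forall l, is_monomial (u l)) (hv : forall l, is_monomial (v l)).
Hypothesis hgen : generates_kernel (fun p => exists l, p = u l - v l) (phi K e').
Variable psi : {ffun A -> nat} -> {mpoly K[n']} -> {mpoly K[n]}.
Hypothesis hpsi : forall (s : {ffun A -> nat}) (w : {mpoly K[n']}),
  is_monomial w -> in_S src tgt theta s -> xmon K (piv s) = phi K e' w ->
  [/\ is_monomial (psi s w), piF pv (psi s w) = w & phi K e (psi s w) = xmon K s].

Definition collapse_gens (p : {mpoly K[n]}) : Prop :=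
  (exists (l : Lambda) (s : {ffun A -> nat}),
     [/\ in_S src tgt theta s, xmon K (piv s) = phi K e' (u l)
       & p = psi s (u l) - psi s (v l)])
  \/ (exists i j k l : 'I_n,
     [/\ (0 < e i a1)%N, (0 < e j a2)%N, e k = shift (e i) a2 a1, e l = shift (e j) a1 a2
       & p = 'X_i * 'X_j - 'X_k * 'X_l]).

Definition ideal_conn m m' : Prop := in_ideal collapse_gens ('X_[m] - 'X_[m']).

Lemma ideal_conn_refl m : ideal_conn m m.
Proof. by rewrite /ideal_conn subrr; apply: in_ideal0. Qed.

Lemma ideal_conn_sym m m' : ideal_conn m m' -> ideal_conn m' m.
Proof. by move=> h; rewrite /ideal_conn -opprB; apply: in_idealN. Qed.

Lemma ideal_conn_trans m m' m'' : ideal_conn m m' -> ideal_conn m' m'' -> ideal_conn m m''.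
Proof. by move=> h h'; rewrite /ideal_conn -(subrKA 'X_[m']); apply: in_idealD. Qed.

Lemma ideal_conn_addl w m m' : ideal_conn m m' -> ideal_conn (w + m)%MM (w + m')%MM.
Proof. by move=> h; rewrite /ideal_conn !mpolyXD -mulrBr; apply: in_idealMl. Qed.

Definition same_fibre m m' : Prop := mpush pv m = mpush pv m' /\ wt m = wt m'.

Lemma same_fibre_sym m m' : same_fibre m m' -> same_fibre m' m.
Proof. by case. Qed.

Lemma same_fibre_trans m m' m'' : same_fibre m m' -> same_fibre m' m'' -> same_fibre m m''.
Proof. by rewrite /same_fibre => -[-> ->]. Qed.

Lemma same_fibre_addl w m m' : same_fibre m m' -> same_fibre (w + m)%MM (w + m')%MM.
Proof.
move=> [hp hw]; split; first by rewrite !mpushD hp.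
by apply/ffunP => a; rewrite !mnm_weightD hw.
Qed.

Lemma same_fibre_mdeg m m' : same_fibre m m' -> mdeg m = mdeg m'.
Proof. by move=> [hp _]; rewrite -(mdeg_mpush pv) hp mdeg_mpush. Qed.

Lemma same_fibre_subU m m' i : same_fibre m m' -> (0 < m i)%N -> (0 < m' i)%N ->
  same_fibre (m - U_(i))%MM (m' - U_(i))%MM.
Proof.
move=> [hp hw] hi hi'; split.
  by apply: (@addIm _ (mpush pv U_(i))); rewrite -!mpushD !mnm_subU_addU.
by apply/ffunP => a; rewrite !mnm_weightB ?lep1mP -?lt0n // hw.
Qed.

Lemma swap_move i k : (0 < e i a1)%N -> (0 < e k a2)%N -> exists x y,
  [/\ pv x = pv i, pv y = pv k, e x a1 = (e i a1).-1, e y a1 = (e k a1).+1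
    & forall w, ideal_conn (w + (U_(i) + U_(k)))%MM (w + (U_(x) + U_(y)))%MM
             /\ same_fibre (w + (U_(i) + U_(k)))%MM (w + (U_(x) + U_(y)))%MM].
Proof.
move=> h1 h2.
have [x hx hpx] : exists2 x, e x = shift (e i) a2 a1 & pv x = pv i.
  by apply: shift_index; rewrite // !inE eqxx orbT.
have [y hy hpy] : exists2 y, e y = shift (e k) a1 a2 & pv y = pv k.
  by apply: shift_index; rewrite // !inE eqxx.
exists x, y; split => //.
- by rewrite hx ffunE (negbTE hne) eqxx; lia.
- by rewrite hy ffunE (negbTE hne) eqxx; lia.
move=> w; split.
  rewrite /ideal_conn !mpolyXD -mulrBr; apply/in_idealMl/in_ideal_gen.
  by right; exists i, k, x, y.
apply: same_fibre_addl; split; first by rewrite !mpushD !mpushU hpx hpy.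
by apply/ffunP => a; rewrite !mnm_weightD !mnm_weightU hx hy shift_swapD.
Qed.

Lemma align_step m m' i j : same_fibre m m' -> (0 < m' i)%N -> (0 < m j)%N -> pv j = pv i ->
  e j a1 != e i a1 -> exists q y, [/\ ideal_conn m q, same_fibre q m', (0 < q y)%N, pv y = pv i
    & (e y a1 - e i a1 + (e i a1 - e y a1) < e j a1 - e i a1 + (e i a1 - e j a1))%N].
Proof.
move=> hf hi hj hpj hne1; have [hp hw] := hf.
have hsum := pv_eq_sum12 hpj.
have hle1 := mnm_weight_ge e a1 hi; have hle2 := mnm_weight_ge e a2 hi.
have hwj c : mnm_weight e (m - U_(j))%MM c = (mnm_weight e m' c - e j c)%N.
  by rewrite mnm_weightB ?lep1mP -?lt0n // hw mnm_weightU.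
case: (ltngtP (e j a1) (e i a1)) => hlt; last by rewrite hlt eqxx in hne1.
- have [k [hk hk1]] : exists k, (0 < (m - U_(j))%MM k)%N /\ (0 < e k a1)%N.
    by apply: mnm_weight_gt0P; rewrite hwj; lia.
  have hj2 : (0 < e j a2)%N by lia.
  have [x [y [hpx hpy hx1 hy1 hmove]]] := swap_move hk1 hj2.
  have [hc hf'] := hmove (m - U_(j) - U_(k))%MM; rewrite mnm_subUU_addUU // in hc hf'.
  exists (m - U_(j) - U_(k) + (U_(x) + U_(y)))%MM, y; split => //.
  + exact: same_fibre_trans (same_fibre_sym hf') hf.
  + by rewrite !mnmDE !mnm1E eqxx !addn_gt0 /= !orbT.
  + by rewrite hpy.
  + by rewrite hy1; lia.
- have [k [hk hk2]] : exists k, (0 < (m - U_(j))%MM k)%N /\ (0 < e k a2)%N.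
    by apply: mnm_weight_gt0P; rewrite hwj; lia.
  have hj1 : (0 < e j a1)%N by lia.
  have [x [y [hpx hpy hx1 hy1 hmove]]] := swap_move hj1 hk2.
  have [hc hf'] := hmove (m - U_(j) - U_(k))%MM.
  rewrite [(U_(j) + _)%MM]addmC mnm_subUU_addUU // in hc hf'.
  exists (m - U_(j) - U_(k) + (U_(x) + U_(y)))%MM, x; split => //.
  + exact: same_fibre_trans (same_fibre_sym hf') hf.
  + by rewrite !mnmDE !mnm1E eqxx !addn_gt0 /= !orbT.
  + by rewrite hpx.
  + by rewrite hx1; lia.
Qed.

Lemma fibre_align m m' i : same_fibre m m' -> (0 < m' i)%N ->
  exists2 q, ideal_conn m q & same_fibre q m' /\ (0 < q i)%N.
Proof.
move=> hf hi; have [j [hj hpj]] : exists j, (0 < m j)%N /\ pv j = pv i.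
  by apply: mpush_gt0P; rewrite hf.1 mnmE (bigD1 i) //=; lia.
have [N hN] : exists N, (e j a1 - e i a1 + (e i a1 - e j a1) <= N)%N by eexists.
elim: N m j hf hj hpj hN => [|N IH] m j hf hj hpj hN;
  case: (eqVneq (e j a1) (e i a1)) => [h1|hne1].
- by exists m; [apply: ideal_conn_refl | rewrite -(pv_inj_a1 hpj h1)].
- by move: hN hne1; rewrite leqn0 addn_eq0 !subn_eq0 -eqn_leq => ->.
- by exists m; [apply: ideal_conn_refl | rewrite -(pv_inj_a1 hpj h1)].
have [q [y [hq hfq hy hpy hlt]]] := align_step hf hi hj hpj hne1.
have [q' hq' hfq'] : exists2 q', ideal_conn q q' & same_fibre q' m' /\ (0 < q' i)%N.
  by apply: (IH q y) => //; lia.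
by exists q' => //; apply: ideal_conn_trans hq hq'.
Qed.

Lemma ideal_conn_fibre m m' : same_fibre m m' -> ideal_conn m m'.
Proof.
have [d hd] : exists d, mdeg m = d by eexists.
elim: d m m' hd => [|d IH] m m' hd hf.
  have := hd; rewrite (same_fibre_mdeg hf) => /eqP; rewrite mdeg_eq0 => /eqP ->.
  by move/eqP: hd; rewrite mdeg_eq0 => /eqP ->; apply: ideal_conn_refl.
have [i hi] : exists i, (0 < m' i)%N.
  by apply: mdeg_gt0P; rewrite -(same_fibre_mdeg hf) hd.
have [q hq [hfq hqi]] := fibre_align hf hi.
apply: ideal_conn_trans hq _; rewrite -(mnm_subU_addU hqi) -(mnm_subU_addU hi) !(addmC _ U_(i)%MM).
apply/ideal_conn_addl/IH; last exact: same_fibre_subU.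
by rewrite mdeg_subU // (same_fibre_mdeg hfq) -(same_fibre_mdeg hf) hd.
Qed.

Lemma phi_binomial l : phi K e' (u l) = phi K e' (v l).
Proof.
have : phi K e' (u l - v l) = 0 by apply/hgen/in_ideal_gen; exists l.
by rewrite phiB => /eqP; rewrite subr_eq0 => /eqP.
Qed.

Definition lifts_conn M M' : Prop := wt' M = wt' M' /\
  forall m m', mpush pv m = M -> mpush pv m' = M' -> wt m = wt m' -> ideal_conn m m'.

Lemma lifts_conn_refl M : lifts_conn M M.
Proof. by split => // m m' <- hp hw; apply: ideal_conn_fibre. Qed.

Lemma lifts_conn_sym M M' : lifts_conn M M' -> lifts_conn M' M.
Proof. by move=> [h H]; split => // m m' hm hm' hw; apply/ideal_conn_sym/H. Qed.

Lemma lifts_conn_trans M M' M'' : lifts_conn M M' -> lifts_conn M' M'' -> lifts_conn M M''.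
Proof.
move=> [h1 H1] [h2 H2]; split; first by rewrite h1.
move=> m m'' hm hm'' hw.
have hs : piv (wt m) = wt' M' by rewrite piv_weight hm h1.
have [m' hm' hw'] := mpush_lift hs.
by apply: ideal_conn_trans (H1 _ _ hm hm' (esym hw')) (H2 _ _ hm' hm'' _); rewrite hw' hw.
Qed.

(* Move the lift of [u l] inside its fibre to [psi_s (u l)], apply the
   corresponding generator of [G_1], and move back inside the fibre of [w + W]. *)
Lemma lifts_conn_move l w U W : u l = 'X_[U] -> v l = 'X_[W] ->
  lifts_conn (w + U)%MM (w + W)%MM.
Proof.
move=> hU hW.
have hUW : wt' U = wt' W by apply: (@xmon_inj K); rewrite -!phi_mpolyX -hU -hW phi_binomial.
split; first by apply/ffunP => b; rewrite !mnm_weightD hUW.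
move=> m m'' hm hm'' hw.
have [mw [mU [hmd hmw hmU]]] := mpush_splitP hm.
have hS : in_S src tgt theta (wt mU).
  by exists (mdeg mU); apply: mnm_weight_nabla => i; apply: e_nabla.
have hxu : xmon K (piv (wt mU)) = phi K e' (u l) by rewrite piv_weight hmU hU phi_mpolyX.
have hxv : xmon K (piv (wt mU)) = phi K e' (v l) by rewrite hxu phi_binomial.
have [[qU hqU] hpU hphU] := hpsi (hu l) hS hxu.
have [[qV hqV] hpV hphV] := hpsi (hv l) hS hxv.
rewrite hqU piF_mpolyX hU in hpU; rewrite hqU phi_mpolyX in hphU.
rewrite hqV piF_mpolyX hW in hpV; rewrite hqV phi_mpolyX in hphV.
move/mpolyX_inj: hpU => hpU; move/xmon_inj: hphU => hwU.
move/mpolyX_inj: hpV => hpV; move/xmon_inj: hphV => hwV.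
rewrite hmd; apply: (@ideal_conn_trans _ (mw + qU)%MM).
  by apply/ideal_conn_addl/ideal_conn_fibre; split; rewrite ?hmU ?hpU.
apply: (@ideal_conn_trans _ (mw + qV)%MM).
  apply: ideal_conn_addl; rewrite /ideal_conn -hqU -hqV.
  by apply: in_ideal_gen; left; exists l, (wt mU).
apply: ideal_conn_fibre; split; first by rewrite mpushD hmw hpV hm''.
by apply/ffunP => a; rewrite -hw hmd !mnm_weightD hwV.
Qed.

Lemma ideal_conn_weight m m' : wt m = wt m' -> ideal_conn m m'.
Proof.
move=> hw.
have hk : phi K e' ('X_[mpush pv m] - 'X_[mpush pv m']) = 0.
  by rewrite phiB !phi_mpolyX -!piv_weight hw subrr.
have [_] := binomial_ideal_connected hu hv lifts_conn_refl lifts_conn_sym lifts_conn_trans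
  lifts_conn_move (proj1 (hgen _) hk).
by apply.
Qed.

Lemma collapse_gens_phi g : collapse_gens g -> phi K e g = 0.
Proof.
case=> [[l [s [hS hx ->]]] | [i [j [k [l [hi hj hk hl ->]]]]]].
  have [_ _ h1] := hpsi (hu l) hS hx.
  have [_ _ h2] := hpsi (hv l) hS (etrans hx (phi_binomial l)).
  by rewrite phiB h1 h2 subrr.
rewrite phiB !phiM !phi_mpolyX !xmonD; apply/eqP; rewrite subr_eq0; apply/eqP.
congr (xmon K _); apply/ffunP => a; rewrite [LHS]ffunE [RHS]ffunE !mnm_weightU hk hl.
by rewrite shift_swapD.
Qed.

Lemma in_ideal_collapse_phi p : in_ideal collapse_gens p -> phi K e p = 0.
Proof.
move=> [k [c [g [hg ->]]]]; rewrite phi_sum big1 // => j _.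
by rewrite phiM (collapse_gens_phi (hg j)) mulr0.
Qed.

End CollapseKernel.

Theorem proposition9p4
  (R : realType)                              (* C := R[i] *)
  (V A : finType) (src tgt : A -> V)          (* the quiver Q *)
  (theta : V -> int)
  (a1 a2 : A)
  (hacyc : acyclic src tgt)
  (hne : a1 != a2) (hsrc : src a1 = src a2) (htgt : tgt a1 = tgt a2)
  (* variables of F: t_{e i}, i < n, for e a bijection onto nabla(Q,theta) cap Z^{Q_1} *)
  (n : nat) (e : 'I_n -> {ffun A -> nat})
  (he : enumerates src tgt theta e)
  (* variables of F': t_{e' j}, j < n', for Q' (arrows arrQ' a2, alpha = a1) *)
  (n' : nat) (e' : 'I_n' -> {ffun arrQ' a2 -> nat})
  (he' : enumerates (fun b : arrQ' a2 => src (val b)) (fun b : arrQ' a2 => tgt (val b)) theta e')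
  (* the algebra map pi : F -> F', t_m |-> t_{pi m} *)
  (pv : 'I_n -> 'I_n') (hpv : forall i, e' (pv i) = piv a1 a2 (e i))
  (* binomial generators u_lambda - v_lambda of ker phi' *)
  (Lambda : Type) (u v : Lambda -> {mpoly R[i][n']})
  (hu : forall l, is_monomial (u l)) (hv : forall l, is_monomial (v l))
  (hgen : generates_kernel (fun p => exists l, p = u l - v l) (phi R[i] e'))
  (* the fixed lifts psi_s *)
  (psi : {ffun A -> nat} -> {mpoly R[i][n']} -> {mpoly R[i][n]})
  (hpsi : forall (s : {ffun A -> nat}) (w : {mpoly R[i][n']}),
      is_monomial w -> in_S src tgt theta s ->
      xmon R[i] (piv a1 a2 s) = phi R[i] e' w ->
      [/\ is_monomial (psi s w), piF pv (psi s w) = w & phi R[i] e (psi s w) = xmon R[i] s]) :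
  generates_kernel
    (fun p : {mpoly R[i][n]} =>
       (* G_1 *)
       (exists (l : Lambda) (s : {ffun A -> nat}),
          [/\ in_S src tgt theta s, xmon R[i] (piv a1 a2 s) = phi R[i] e' (u l)
            & p = psi s (u l) - psi s (v l)])
       \/
       (* G_2 : t_m t_n - t_{m + eps2 - eps1} t_{n + eps1 - eps2} *)
       (exists i j k l : 'I_n,
          [/\ (0 < e i a1)%N, (0 < e j a2)%N,
              e k = shift (e i) a2 a1, e l = shift (e j) a1 a2
            & p = 'X_i * 'X_j - 'X_k * 'X_l]))
    (phi R[i] e).
Proof.
(* Acyclicity of Q only serves to make nabla(Q, theta) finite, which is
   built into the enumerations [e] and [e']. *)
move=> p; split; last exact: (in_ideal_collapse_phi hne hu hv hgen hpsi).
apply: kernel_phi_in_ideal => m m'.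
exact: (ideal_conn_weight hne hsrc htgt he he' hpv hu hv hgen hpsi).
Qed.
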